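(* Let $\varphi(z)\in K(z)$ have degree $d\ge1$, and let $(F,G)$ be a normalized representation of $\varphi$, with $F(X,Y)=\sum_{i=0}^d a_iX^iY^{d-i}$ and $G(X,Y)=\sum_{i=0}^d b_iX^iY^{d-i}$. Then $$\mathrm{GIR}(\varphi)=\max_{i\ne j}\left|\det\begin{pmatrix}a_i&a_j\\ b_i&b_j\end{pmatrix}\right|.$$
   Context: $K$ is a complete, algebraically closed field with a nontrivial nonarchimedean absolute value; $\mathcal O=\{|z|\le1\}$, $\mathcal O^\times$ its units. A normalized representation of $\varphi$ is a pair of homogeneous $F,G\in\mathcal O[X,Y]$ of degree $d$, with no common factor, at least one coefficient in $\mathcal O^\times$, such that $\varphi([X:Y])=[F(X,Y):G(X,Y)]$ (with $z=X/Y$). $\mathbf P^1_{\mathrm{Berk}}$ is the Berkovich projective line over $K$; $\zeta_{a,r}$ is the point corresponding to the disc $D(a,r)=\{z:|z-a|\le r\}$, $\zeta_G=\zeta_{0,1}$. For $x=\zeta_{a,r}$, $r>0$, $\mathrm{diam}_G(x)=r/\max(1,|a|,r)^2$ (equivalently $q^{-\rho(\zeta_G,x)}$ for the logarithmic path metric $\rho$). Gauss Image radius: $\mathrm{GIR}(\varphi)=\mathrm{diam}_G(\varphi(\zeta_G))$. *)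

From Stdlib Require Import Rdefinitions Raxioms Rfunctions Rbasic_fun.
From HB Require Import structures.
From mathcomp Require Import all_boot all_order all_algebra.
Set Implicit Arguments. Unset Strict Implicit. Unset Printing Implicit Defensive.
Import GRing.Theory.
Local Open Scope ring_scope.
Local Notation "x %:F" := (@FracField.tofrac _ x).

Section Defs.
Variable K : fieldType.
Variable abs : K -> R.

Definition nonarch_abs : Prop :=
  (forall x : K, Rle R0 (abs x)) /\
  (forall x : K, abs x = R0 <-> x = 0) /\
  (forall x y : K, abs (x * y) = Rmult (abs x) (abs y)) /\
  (forall x y : K, Rle (abs (x + y)) (Rmax (abs x) (abs y))).

Definition nontrivial_abs : Prop := exists x : K, abs x <> R0 /\ abs x <> R1.

Definition complete_abs : Prop :=
  forall u : nat -> K,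
    (forall eps, Rlt R0 eps -> exists N : nat, forall m n : nat, (N <= m)%N -> (N <= n)%N ->
        Rlt (abs (u m - u n)) eps) ->
    exists l : K, forall eps, Rlt R0 eps -> exists N : nat, forall n : nat, (N <= n)%N ->
        Rlt (abs (u n - l)) eps.

Definition gauss_norm (p : {poly K}) : R :=
  \big[Rmax/R0]_(i < size p) abs p`_i.

(* zeta_{c,r}(f) = sup_{D(c,r)} |f| = max_i |f_i(c)| r^i  (Taylor coefficients at c) *)
Definition zeta (c : K) (r : R) (f : {poly K}) : R :=
  \big[Rmax/R0]_(i < size f) Rmult (abs (f \Po ('X + c%:P))`_i) (pow r i).

(* the Gauss point zeta_G extended multiplicatively to K(z) *)
Definition gaussF (x : {fraction {poly K}}) : R :=
  Rdiv (gauss_norm (\n_(repr x))) (gauss_norm (\d_(repr x))).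

Definition compose (f : {poly K}) (phi : {fraction {poly K}}) : {fraction {poly K}} :=
  \sum_(i < size f) (f`_i)%:P%:F * phi ^+ i.

(* the seminorm on K[T] of the point phi(zeta_G): f |-> zeta_G(f o phi) *)
Definition push_zetaG (phi : {fraction {poly K}}) (f : {poly K}) : R :=
  gaussF (compose f phi).

Definition rat_degree (phi : {fraction {poly K}}) (d : nat) : Prop :=
  exists p q : {poly K}, q != 0 /\ coprimep p q /\ phi = p%:F / q%:F /\
    (maxn (size p) (size q)).-1 = d.

(* the binary form sum_{i<=d} a_i X^i Y^(d-i), as an element of K[Y][X] *)
Definition form (d : nat) (a : nat -> K) : {poly {poly K}} :=
  \sum_(i < d.+1) ((a i) *: 'X^(d - i))%:P * 'X^i.

Definition dehom (d : nat) (a : nat -> K) : {poly K} :=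
  \sum_(i < d.+1) (a i) *: 'X^i.

Definition no_common_factor (F G : {poly {poly K}}) : Prop :=
  forall H Q1 Q2 : {poly {poly K}}, F = H * Q1 -> G = H * Q2 ->
    exists c : K, H = c%:P%:P.

Definition normalized_rep (d : nat) (a b : nat -> K) (phi : {fraction {poly K}}) : Prop :=
  (forall i, (i <= d)%N -> Rle (abs (a i)) R1 /\ Rle (abs (b i)) R1) /\
  (exists i, (i <= d)%N /\ (abs (a i) = R1 \/ abs (b i) = R1)) /\
  no_common_factor (form d a) (form d b) /\
  phi = (dehom d a)%:F / (dehom d b)%:F.

Definition max_minor (d : nat) (a b : nat -> K) : R :=
  \big[Rmax/R0]_(i < d.+1) \big[Rmax/R0]_(j < d.+1 | i != j)
     abs (a i * b j - a j * b i).

Definition diamG (c : K) (r : R) : R :=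
  Rdiv r (pow (Rmax R1 (Rmax (abs c) r)) 2).
End Defs.

(* The weighted Gauss norms [|f|_r = max_i |f_i| r^i] are multiplicative
   (Gauss's lemma), so the seminorm [f |-> zeta_G(f o phi)] is multiplicative;
   over an algebraically closed field such a seminorm is determined by its
   values on constants and on the linear polynomials [X - al].  Writing
   [phi = A/B] with [|B| = |b_j|] attained at [j] and [c = a_j/b_j], the
   ultrametric inequality gives [|A - al B| = max(|c - al| |B|, |A - c B|)], so
   [phi(zeta_G) = zeta_{c,r}] with [r = |A - c B| / |B|].  The normalization
   [max(|A|, |B|) = 1] turns [diam_G] into [|A - c B| |B|], and the 2x2
   minors, unchanged by [a -> a - c b], attain exactly this value at the
   pair [(i, j)] where [|a_i - c b_i|] is maximal. *)
From Stdlib Require Import Rdefinitions Raxioms Rfunctions Rbasic_fun RIneq Lra.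
From HB Require Import structures.
From mathcomp Require Import all_boot all_order all_algebra.
From mathcomp Require Import zify.
Set Implicit Arguments. Unset Strict Implicit. Unset Printing Implicit Defensive.
Import GRing.Theory.
Local Open Scope ring_scope.
Local Notation "x %:F" := (@FracField.tofrac _ x).

Lemma bigmax_ge0 (I : Type) (s : seq I) (P : pred I) (F : I -> R) :
  Rle R0 (\big[Rmax/R0]_(i <- s | P i) F i).
Proof.
elim/big_rec: _ => [|i x _ hx]; first exact: Rle_refl.
exact: Rle_trans hx (Rmax_r _ _).
Qed.

Lemma bigmax_le (I : Type) (s : seq I) (P : pred I) (F : I -> R) (B : R) :
  Rle R0 B -> (forall i, P i -> Rle (F i) B) ->
  Rle (\big[Rmax/R0]_(i <- s | P i) F i) B.
Proof.
move=> hB hF; elim/big_rec: _ => [//|i x Pi hx].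
exact: Rmax_lub (hF i Pi) hx.
Qed.

Lemma le_bigmax (I : eqType) (s : seq I) (P : pred I) (F : I -> R) i :
  i \in s -> P i -> Rle (F i) (\big[Rmax/R0]_(j <- s | P j) F j).
Proof.
elim: s => [//|x s IH]; rewrite inE big_cons => /orP [/eqP <-|ins] Pi.
  by rewrite Pi; apply: Rmax_l.
case: ifP => _; last exact: IH.
exact: Rle_trans (IH ins Pi) (Rmax_r _ _).
Qed.

Lemma bigmax_attained (I : eqType) (s : seq I) (P : pred I) (F : I -> R) :
  \big[Rmax/R0]_(j <- s | P j) F j = R0 \/
  exists i, [/\ i \in s, P i & \big[Rmax/R0]_(j <- s | P j) F j = F i].
Proof.
elim: s => [|x s IH]; first by left; rewrite big_nil.
rewrite big_cons; case: ifP => Px; last first.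
  case: IH => [->|[i [ins Pi ->]]]; [by left|right; exists i; by rewrite inE ins orbT].
unfold Rmax; case: Rle_dec => _.
  case: IH => [->|[i [ins Pi ->]]]; first by left.
  by right; exists i; rewrite inE ins orbT.
right; exists x; by rewrite inE eqxx.
Qed.

Lemma R0_lt_R1 : Rlt R0 R1. Proof. exact: Rlt_0_1. Qed.

Lemma Rmax_div (x y B : R) : Rlt R0 B ->
  Rdiv (Rmax (Rmult x B) y) B = Rmax x (Rdiv y B).
Proof.
move=> hB.
have -> : y = Rmult B (Rdiv y B) by field; lra.
rewrite Rmult_comm RmaxRmult; last lra.
have -> : Rdiv (Rmult B (Rdiv y B)) B = Rdiv y B by field; lra.
field; lra.
Qed.

(* [x], [rho] and [B] stand for [|c|], [|A - c B|] and [|B|]. *)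
Lemma diam_rescale (x rho B : R) : Rlt R0 B -> Rlt R0 rho -> Rle R0 x ->
  Rmax (Rmax (Rmult x B) rho) B = R1 ->
  Rdiv (Rdiv rho B) (pow (Rmax R1 (Rmax x (Rdiv rho B))) 2) = Rmult rho B.
Proof.
move=> hB hr hx h.
have e : Rmax (Rmax (Rmult x B) rho) B = Rmult B (Rmax R1 (Rmax x (Rdiv rho B))).
  rewrite -RmaxRmult; last lra.
  rewrite -RmaxRmult; last lra.
  have -> : Rmult B (Rdiv rho B) = rho by field; lra.
  by rewrite Rmult_1_r (Rmult_comm B x) Rmax_comm.
rewrite h in e.
have -> : Rmax R1 (Rmax x (Rdiv rho B)) = Rinv B.
  apply: (Rmult_eq_reg_l B); last lra.
  by rewrite -e Rinv_r //; lra.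
field; lra.
Qed.

Lemma frac_repr (R : idomainType) (x : {fraction R}) :
  x = (\n_(repr x))%:F / (\d_(repr x))%:F.
Proof.
rewrite -[x in LHS]reprK; set r := repr x.
have hd : \d_r != 0 by exact: denom_ratioP.
apply: (@mulIf _ (\d_r)%:F); first by rewrite tofrac_eq0.
rewrite mulfVK ?tofrac_eq0 //.
unlock FracField.tofrac.
transitivity ((\pi_({fraction R}))%qT (FracField.mulf r (Ratio \d_r 1))).
  by rewrite FracField.pi_mul.
apply/eqmodP => /=; rewrite FracField.equivfE /=.
rewrite /FracField.mulf !numden_Ratio ?oner_neq0 ?mulf_neq0 ?oner_neq0 //.
by rewrite !mulr1 mulrC.
Qed.

Lemma rat_degree_const (K : fieldType) (k : K) (d : nat) :
  rat_degree (k%:P)%:F d -> d = 0%N.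
Proof.
case=> p [q [hq [cop [e hs]]]].
have ep : p = k%:P * q.
  by apply/eqP; rewrite -tofrac_eq tofracM e divfK // tofrac_eq0.
have sq : size q = 1%N.
  have [k0|k0] := eqVneq k 0.
    move: cop; rewrite ep k0 mul0r coprime0p => h.
    by apply/eqP; rewrite size_poly_eq1.
  by move: cop; rewrite ep mul_polyC coprimepZl // coprimepp => /eqP.
have sp : (size p <= 1)%N by rewrite ep mul_polyC -sq size_scale_leq.
by move: hs; rewrite sq (maxn_idPr sp).
Qed.

Lemma multiplicative_eq_on_linear (K : closedFieldType) (m1 m2 : {poly K} -> R) :
  (forall f g, m1 (f * g) = Rmult (m1 f) (m1 g)) ->
  (forall f g, m2 (f * g) = Rmult (m2 f) (m2 g)) ->
  (forall k, m1 k%:P = m2 k%:P) ->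
  (forall al, m1 ('X - al%:P) = m2 ('X - al%:P)) -> forall f, m1 f = m2 f.
Proof.
move=> M1 M2 C X f; have [rs ->] := closed_field_poly_normal f.
rewrite -mul_polyC M1 M2 C; congr Rmult.
elim: rs => [|z rs IH]; first by rewrite big_nil -polyC1 C.
by rewrite big_cons M1 M2 X IH.
Qed.

Section NonarchimedeanAbs.
Variable K : fieldType.
Variable abs : K -> R.
Hypothesis Habs : nonarch_abs abs.

Lemma abs_ge0 x : Rle R0 (abs x). Proof. by case: Habs. Qed.
Lemma abs_eq0 x : abs x = R0 <-> x = 0. Proof. by case: Habs => _ []. Qed.
Lemma absM x y : abs (x * y) = Rmult (abs x) (abs y). Proof. by case: Habs => _ [_ []]. Qed.
Lemma absD x y : Rle (abs (x + y)) (Rmax (abs x) (abs y)). Proof. by case: Habs => _ [_ []]. Qed.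
Lemma abs0 : abs 0 = R0. Proof. exact/abs_eq0. Qed.

Lemma abs_gt0 x : x != 0 -> Rlt R0 (abs x).
Proof.
move=> /eqP hx; have [//|h] := Rle_lt_or_eq_dec _ _ (abs_ge0 x).
by case: hx; apply/abs_eq0.
Qed.

Lemma abs1 : abs 1 = R1.
Proof.
have h := absM 1 1; rewrite mulr1 in h.
have h1 := @abs_gt0 1 (oner_neq0 K).
have : Rmult (abs 1) (Rminus (abs 1) R1) = R0.
  by rewrite /Rminus Rmult_plus_distr_l -h; ring.
case/Rmult_integral; lra.
Qed.

Lemma absN x : abs (- x) = abs x.
Proof.
have h := absM (-1) (-1); rewrite mulrNN mulr1 abs1 in h.
have h1 : abs (-1) = R1 by have := abs_ge0 (-1); nra.
by rewrite -mulN1r absM h1 Rmult_1_l.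
Qed.

Lemma absB x y : Rle (abs (x - y)) (Rmax (abs x) (abs y)).
Proof. by rewrite -(absN y); apply: absD. Qed.

Lemma absBC x y : abs (x - y) = abs (y - x).
Proof. by rewrite -absN opprB. Qed.

Lemma absD_strict x y : Rlt (abs y) (abs x) -> abs (x + y) = abs x.
Proof.
move=> h; have h1 := absD x y.
have h2 := absB (x + y) y; rewrite addrK in h2.
apply: Rle_antisym.
  by apply: Rle_trans h1 _; apply: Rmax_lub; lra.
move: h2; unfold Rmax at 1; case: Rle_dec; lra.
Qed.

Lemma abs_sum_le (I : Type) (s : seq I) (P : pred I) (F : I -> K) (t B : R) :
  Rlt R0 t -> Rle R0 B -> (forall i, P i -> Rle (Rmult (abs (F i)) t) B) ->
  Rle (Rmult (abs (\sum_(i <- s | P i) F i)) t) B.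
Proof.
move=> ht hB hF; elim/big_rec: _ => [|i x Pi hx]; first by rewrite abs0; lra.
have h := absD (F i) x; have hi := hF i Pi.
apply: Rle_trans (Rmult_le_compat_r _ _ _ (Rlt_le _ _ ht) h) _.
unfold Rmax; case: Rle_dec => _; lra.
Qed.

Lemma abs_sum_lt (I : Type) (s : seq I) (P : pred I) (F : I -> K) (t B : R) :
  Rlt R0 t -> Rlt R0 B -> (forall i, P i -> Rlt (Rmult (abs (F i)) t) B) ->
  Rlt (Rmult (abs (\sum_(i <- s | P i) F i)) t) B.
Proof.
move=> ht hB hF; elim/big_rec: _ => [|i x Pi hx]; first by rewrite abs0; lra.
have h := absD (F i) x; have hi := hF i Pi.
apply: Rle_lt_trans (Rmult_le_compat_r _ _ _ (Rlt_le _ _ ht) h) _.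
unfold Rmax; case: Rle_dec => _; lra.
Qed.

Lemma abs_sub_center (c c' : K) (r : R) :
  Rle (abs (c - c')) r -> Rmax (abs c') r = Rmax (abs c) r.
Proof.
move=> hcc.
have le_shift (x y : K) : Rle (abs (x - y)) r -> Rle (Rmax (abs x) r) (Rmax (abs y) r).
  move=> hxy; apply: Rmax_lub; last exact: Rmax_r.
  have := absD y (x - y); rewrite addrC subrK => h.
  apply: Rle_trans h _; apply: Rmax_lub; first exact: Rmax_l.
  exact: Rle_trans hxy (Rmax_r _ _).
by apply: Rle_antisym; apply: le_shift; rewrite // absBC.
Qed.

Definition wterm (r : R) (p : {poly K}) (i : nat) : R := Rmult (abs p`_i) (pow r i).
Definition wnorm (r : R) (p : {poly K}) : R := \big[Rmax/R0]_(i < size p) wterm r p i.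

Lemma wterm_ge0 (r : R) (p : {poly K}) i : Rle R0 r -> Rle R0 (wterm r p i).
Proof. by move=> hr; apply: Rmult_le_pos; [exact: abs_ge0|exact: pow_le]. Qed.

Lemma wnorm_ge0 (r : R) (p : {poly K}) : Rle R0 (wnorm r p).
Proof. exact: bigmax_ge0. Qed.

Lemma wterm_le_wnorm (r : R) (p : {poly K}) k : Rle R0 r -> Rle (wterm r p k) (wnorm r p).
Proof.
move=> hr; case: (ltnP k (size p)) => hk.
  by apply: (le_bigmax (fun i : 'I_(size p) => wterm r p i) (i := Ordinal hk));
    rewrite ?mem_index_enum.
by rewrite /wterm nth_default // abs0 Rmult_0_l; exact: wnorm_ge0.
Qed.

Lemma wnorm_le (r : R) (p : {poly K}) B :
  Rle R0 B -> (forall k, Rle (wterm r p k) B) -> Rle (wnorm r p) B.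
Proof. by move=> hB h; apply: bigmax_le. Qed.

Lemma wnorm_bigmax (r : R) (p : {poly K}) n : Rle R0 r -> (size p <= n)%N ->
  \big[Rmax/R0]_(i < n) wterm r p i = wnorm r p.
Proof.
move=> hr hn; apply: Rle_antisym.
  by apply: bigmax_le => [|i _]; [exact: wnorm_ge0|exact: wterm_le_wnorm].
apply: wnorm_le => [|k]; first exact: bigmax_ge0.
case: (ltnP k n) => hk.
  by apply: (le_bigmax (fun i : 'I_n => wterm r p i) (i := Ordinal hk));
    rewrite ?mem_index_enum.
rewrite /wterm nth_default ?abs0 ?Rmult_0_l; last exact: leq_trans hn hk.
exact: bigmax_ge0.
Qed.

Lemma wnorm0 r : wnorm r 0 = R0.
Proof. by rewrite /wnorm size_poly0 big_ord0. Qed.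

Lemma wnorm_gt0 (r : R) (p : {poly K}) : Rlt R0 r -> p != 0 -> Rlt R0 (wnorm r p).
Proof.
move=> hr hp; apply: Rlt_le_trans (wterm_le_wnorm p (size p).-1 (Rlt_le _ _ hr)).
apply: Rmult_lt_0_compat; last exact: pow_lt.
by apply: abs_gt0; rewrite -lead_coefE lead_coef_eq0.
Qed.

Lemma wnorm_argmin (r : R) (p : {poly K}) : Rlt R0 r -> p != 0 ->
  exists i, wnorm r p = wterm r p i /\ forall j, (j < i)%N -> Rlt (wterm r p j) (wnorm r p).
Proof.
move=> hr hp; have hr0 := Rlt_le _ _ hr.
pose P j := if Req_EM_T (wterm r p j) (wnorm r p) then true else false.
have hP : exists n, P n.
  case: (bigmax_attained (index_enum 'I_(size p)) xpredT (fun i => wterm r p i)).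
    by move=> h; have := wnorm_gt0 hr hp; rewrite /wnorm h; lra.
  by case=> i [_ _ h]; exists i; rewrite /P; case: Req_EM_T => // ne; case: ne; exact: esym h.
case: (ex_minnP hP) => m Pm hmin; exists m; split.
  by move: Pm; rewrite /P; case: Req_EM_T.
move=> j hj; case/Rle_lt_or_eq_dec: (wterm_le_wnorm p j hr0) => // heq.
by have := hmin j; rewrite /P; case: Req_EM_T => // _ /(_ isT); rewrite leqNgt hj.
Qed.

Lemma wterm_coefM (r : R) (p q : {poly K}) i k : (i <= k)%N ->
  Rmult (abs (p`_i * q`_(k - i))) (pow r k) = Rmult (wterm r p i) (wterm r q (k - i)).
Proof.
move=> hik; rewrite absM /wterm -[in pow r k](subnKC hik) pow_add; ring.
Qed.

Lemma wnormM_le (r : R) (p q : {poly K}) : Rlt R0 r ->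
  Rle (wnorm r (p * q)) (Rmult (wnorm r p) (wnorm r q)).
Proof.
move=> hr; have hr0 := Rlt_le _ _ hr.
have hpq : Rle R0 (Rmult (wnorm r p) (wnorm r q)) by apply: Rmult_le_pos; exact: wnorm_ge0.
apply: wnorm_le => // k; rewrite /wterm coefM.
apply: abs_sum_le => // [|i _]; first exact: pow_lt.
rewrite wterm_coefM -1?ltnS //.
by apply: Rmult_le_compat; try exact: wterm_ge0; exact: wterm_le_wnorm.
Qed.

(* Gauss's lemma: at the sum of the smallest indices where [p] and [q] reach
   their norms, the product coefficient has a single dominant summand. *)
Lemma wnormM_ge (r : R) (p q : {poly K}) : Rlt R0 r -> p != 0 -> q != 0 ->
  Rle (Rmult (wnorm r p) (wnorm r q)) (wnorm r (p * q)).
Proof.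
move=> hr hp hq; have hr0 := Rlt_le _ _ hr.
have [i0 [hi0 lt_i0]] := wnorm_argmin hr hp.
have [j0 [hj0 lt_j0]] := wnorm_argmin hr hq.
pose k := (i0 + j0)%N; have hkj : (k - i0 = j0)%N by rewrite /k addKn.
apply: Rle_trans (wterm_le_wnorm (p * q) k hr0).
have hik : (i0 < k.+1)%N by rewrite ltnS leq_addr.
rewrite /wterm coefM (bigD1 (Ordinal hik)) //=.
set S := \sum_(j < k.+1 | j != Ordinal hik) _.
have hx : Rmult (abs (p`_i0 * q`_(k - i0))) (pow r k) = Rmult (wnorm r p) (wnorm r q).
  by rewrite wterm_coefM ?leq_addr // hkj -hi0 -hj0.
have hS : Rlt (Rmult (abs S) (pow r k)) (Rmult (wnorm r p) (wnorm r q)).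
  apply: abs_sum_lt; [exact: pow_lt|by apply: Rmult_lt_0_compat; exact: wnorm_gt0|].
  move=> j hj; rewrite wterm_coefM -1?ltnS //.
  have a0 := wterm_ge0 p j hr0; have b0 := wterm_ge0 q (k - j) hr0.
  have aW := wterm_le_wnorm p j hr0; have bW := wterm_le_wnorm q (k - j) hr0.
  have [/lt_i0 h|hji] := ltnP j i0.
    apply: Rle_lt_trans (Rmult_le_compat_l _ _ _ a0 bW) _.
    exact: Rmult_lt_compat_r (wnorm_gt0 hr hq) h.
  have {}hji : (i0 < j)%N.
    by rewrite ltn_neqAle hji andbT; apply: contra hj => /eqP e; apply/eqP/val_inj.
  have /lt_j0 h : (k - j < j0)%N by move: hji (ltn_ord j); rewrite /k; lia.
  apply: Rle_lt_trans (Rmult_le_compat_r _ _ _ b0 aW) _.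
  exact: Rmult_lt_compat_l (wnorm_gt0 hr hp) h.
rewrite absD_strict.
  by rewrite hx; exact: Rle_refl.
by apply: (Rmult_lt_reg_r (pow r k)); [exact: pow_lt|rewrite hx].
Qed.

Lemma wnormM (r : R) (p q : {poly K}) : Rlt R0 r ->
  wnorm r (p * q) = Rmult (wnorm r p) (wnorm r q).
Proof.
move=> hr; have [->|hp] := eqVneq p 0; first by rewrite mul0r !wnorm0 Rmult_0_l.
have [->|hq] := eqVneq q 0; first by rewrite mulr0 !wnorm0 Rmult_0_r.
by apply: Rle_antisym; [exact: wnormM_le|exact: wnormM_ge].
Qed.

Lemma wnormC (r : R) (k : K) : Rle R0 r -> wnorm r k%:P = abs k.
Proof.
move=> hr; apply: Rle_antisym.
  apply: wnorm_le => [|[|i]]; first exact: abs_ge0.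
    by rewrite /wterm coefC /= Rmult_1_r; apply: Rle_refl.
  by rewrite /wterm coefC /= abs0 Rmult_0_l; apply: abs_ge0.
by have := wterm_le_wnorm k%:P 0 hr; rewrite /wterm coefC /= Rmult_1_r.
Qed.

Lemma wnorm_XaddC (r : R) (e : K) : Rlt R0 r -> wnorm r ('X + e%:P) = Rmax (abs e) r.
Proof.
move=> hr; have hr0 := Rlt_le _ _ hr.
have coefXC i : ('X + e%:P)`_i = if i == 0%N then e else if i == 1%N then 1 else 0.
  by rewrite coefD coefX coefC; case: i => [|[|i]] /=; rewrite ?add0r ?addr0.
apply: Rle_antisym.
  apply: wnorm_le => [|i]; first by apply: Rle_trans (Rmax_r _ _).
  rewrite /wterm coefXC; case: i => [|[|i]] /=.
  - by rewrite Rmult_1_r; apply: Rmax_l.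
  - by rewrite abs1 Rmult_1_l Rmult_1_r; apply: Rmax_r.
  - by rewrite abs0 Rmult_0_l; apply: Rle_trans (Rmax_r _ _).
apply: Rmax_lub.
  by have := wterm_le_wnorm ('X + e%:P) 0 hr0; rewrite /wterm coefXC /= Rmult_1_r.
have := wterm_le_wnorm ('X + e%:P) 1 hr0.
by rewrite /wterm coefXC /= abs1 Rmult_1_l Rmult_1_r.
Qed.

Lemma gauss_norm_wnorm (p : {poly K}) : gauss_norm abs p = wnorm R1 p.
Proof. by apply: eq_bigr => i _; rewrite /wterm pow1 Rmult_1_r. Qed.

Lemma zeta_wnorm (c : K) (r : R) (f : {poly K}) : Rle R0 r ->
  zeta abs c r f = wnorm r (f \Po ('X + c%:P)).
Proof.
by move=> hr; apply: wnorm_bigmax; rewrite // size_comp_poly2 // size_XaddC.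
Qed.

Lemma zetaM (c : K) (r : R) (f g : {poly K}) : Rlt R0 r ->
  zeta abs c r (f * g) = Rmult (zeta abs c r f) (zeta abs c r g).
Proof. by move=> hr; rewrite !zeta_wnorm ?comp_polyM ?wnormM //; exact: Rlt_le. Qed.

Lemma zetaC (c : K) (r : R) (k : K) : Rle R0 r -> zeta abs c r k%:P = abs k.
Proof. by move=> hr; rewrite zeta_wnorm // comp_polyC wnormC. Qed.

Lemma zeta_XsubC (c : K) (r : R) (al : K) : Rlt R0 r ->
  zeta abs c r ('X - al%:P) = Rmax (abs (c - al)) r.
Proof.
move=> hr; rewrite zeta_wnorm; last exact: Rlt_le.
by rewrite comp_polyB comp_polyX comp_polyC -addrA -polyCB wnorm_XaddC.
Qed.

Lemma diamG_zeta_eq (c c' : K) (r r' : R) : Rlt R0 r -> Rlt R0 r' ->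
  (forall al, zeta abs c r ('X - al%:P) = zeta abs c' r' ('X - al%:P)) ->
  diamG abs c' r' = diamG abs c r.
Proof.
move=> hr hr' E.
have E1 := E c; have E2 := E c'.
rewrite !zeta_XsubC // !subrr abs0 in E1 E2.
rewrite (Rmax_right _ _ (Rlt_le _ _ hr)) in E1.
rewrite (Rmax_right _ _ (Rlt_le _ _ hr')) in E2.
have rr : r' = r by apply: Rle_antisym; [rewrite E1|rewrite -E2]; apply: Rmax_r.
by rewrite /diamG rr (@abs_sub_center c c' r) // E1 absBC; apply: Rmax_l.
Qed.

Lemma gaussF_frac (n d : {poly K}) : d != 0 ->
  gaussF abs (n%:F / d%:F) = Rdiv (wnorm R1 n) (wnorm R1 d).
Proof.
move=> hd; rewrite /gaussF !gauss_norm_wnorm.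
have := frac_repr (n%:F / d%:F).
set n0 := \n_(repr _); set d0 := \d_(repr _).
have hd0 : d0 != 0 := denom_ratioP _.
move/eqP; rewrite eqr_div ?tofrac_eq0 // -!tofracM tofrac_eq => /eqP/(congr1 (wnorm R1)).
rewrite !wnormM; try exact: Rlt_0_1.
have := wnorm_gt0 R0_lt_R1 hd; have := wnorm_gt0 R0_lt_R1 hd0 => b0 b h.
have -> : wnorm R1 n0 = Rdiv (Rmult (wnorm R1 n) (wnorm R1 d0)) (wnorm R1 d).
  by rewrite h; field; lra.
field; lra.
Qed.

Lemma gaussFM (x y : {fraction {poly K}}) :
  gaussF abs (x * y) = Rmult (gaussF abs x) (gaussF abs y).
Proof.
have hx : \d_(repr x) != 0 := denom_ratioP _.
have hy : \d_(repr y) != 0 := denom_ratioP _.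
rewrite {1}(frac_repr x) {1}(frac_repr y) mulf_div -!tofracM.
rewrite gaussF_frac ?mulf_neq0 // /gaussF !gauss_norm_wnorm !wnormM; try exact: Rlt_0_1.
have := wnorm_gt0 R0_lt_R1 hx; have := wnorm_gt0 R0_lt_R1 hy.
by rewrite /Rdiv => *; field; lra.
Qed.

Lemma gaussFC (k : K) : gaussF abs (k%:P)%:F = abs k.
Proof.
rewrite -[(k%:P)%:F]divr1 -tofrac1 gaussF_frac ?oner_neq0 // !wnormC; try exact: Rle_0_1.
by rewrite abs1 /Rdiv Rinv_1 Rmult_1_r.
Qed.

Definition polyC_frac : {rmorphism K -> {fraction {poly K}}} := (@FracField.tofrac _) \o polyC.

Lemma compose_horner (f : {poly K}) (phi : {fraction {poly K}}) :
  compose f phi = (map_poly polyC_frac f).[phi].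
Proof.
rewrite horner_coef size_map_poly /compose; apply: eq_bigr => i _.
by rewrite coef_map.
Qed.

Lemma push_zetaGM (phi : {fraction {poly K}}) (f g : {poly K}) :
  push_zetaG abs phi (f * g) = Rmult (push_zetaG abs phi f) (push_zetaG abs phi g).
Proof. by rewrite /push_zetaG !compose_horner rmorphM hornerM gaussFM. Qed.

Lemma push_zetaGC (phi : {fraction {poly K}}) (k : K) : push_zetaG abs phi k%:P = abs k.
Proof. by rewrite /push_zetaG compose_horner map_polyC hornerC gaussFC. Qed.

Lemma push_zetaG_XsubC (phi : {fraction {poly K}}) (al : K) :
  push_zetaG abs phi ('X - al%:P) = gaussF abs (phi - (al%:P)%:F).
Proof.
rewrite /push_zetaG compose_horner rmorphB /= map_polyX map_polyC.
by rewrite hornerD hornerN hornerX hornerC.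
Qed.

Definition vnorm (d : nat) (v : nat -> K) : R := \big[Rmax/R0]_(i < d.+1) abs (v i).

Lemma vnorm_ge0 d v : Rle R0 (vnorm d v). Proof. exact: bigmax_ge0. Qed.

Lemma vnorm_le (d : nat) (v : nat -> K) B :
  Rle R0 B -> (forall i, (i <= d)%N -> Rle (abs (v i)) B) -> Rle (vnorm d v) B.
Proof. by move=> hB h; apply: bigmax_le => // i _; apply: h; rewrite -ltnS. Qed.

Lemma le_vnorm (d : nat) (v : nat -> K) i : (i <= d)%N -> Rle (abs (v i)) (vnorm d v).
Proof.
move=> hi; apply: (le_bigmax (fun i : 'I_d.+1 => abs (v i)) (i := Ordinal (hi : i < d.+1)%N));
  by rewrite ?mem_index_enum.
Qed.

Lemma vnorm_attained (d : nat) (v : nat -> K) :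
  vnorm d v = R0 \/ exists i, (i <= d)%N /\ vnorm d v = abs (v i).
Proof.
case: (bigmax_attained (index_enum 'I_d.+1) xpredT (fun i => abs (v i))); first by left.
by case=> i [_ _ h]; right; exists i; rewrite -ltnS.
Qed.

Lemma coef_dehom (d : nat) (v : nat -> K) i :
  (dehom d v)`_i = if (i <= d)%N then v i else 0.
Proof. by rewrite /dehom -poly_def coef_poly. Qed.

Lemma wnorm_dehom (d : nat) (v : nat -> K) : wnorm R1 (dehom d v) = vnorm d v.
Proof.
rewrite -(@wnorm_bigmax R1 _ d.+1 Rle_0_1); last by rewrite /dehom -poly_def size_poly.
by apply: eq_bigr => i _; rewrite /wterm coef_dehom -ltnS ltn_ord pow1 Rmult_1_r.
Qed.

Lemma dehom_subCM (d : nat) (a b : nat -> K) (al : K) :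
  dehom d a - al%:P * dehom d b = dehom d (fun i => a i - al * b i).
Proof.
apply/polyP => i; rewrite coefB coefCM !coef_dehom.
by case: ifP; rewrite ?mulr0 ?subr0.
Qed.

Lemma dehom_vnorm_eq0 (d : nat) (v : nat -> K) : vnorm d v = R0 -> dehom d v = 0.
Proof.
move=> h0; apply/polyP => i; rewrite coef_dehom coef0; case: ifP => // hi.
apply/abs_eq0/Rle_antisym; last exact: abs_ge0.
by rewrite -h0; exact: le_vnorm.
Qed.

Lemma vnorm_addZ (d : nat) (u v : nat -> K) (e : K) :
  Rle (vnorm d (fun i => u i + e * v i)) (Rmax (vnorm d u) (Rmult (abs e) (vnorm d v))).
Proof.
apply: vnorm_le => [|i hi]; first by apply: Rle_trans (Rmax_l _ _); exact: vnorm_ge0.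
apply: Rle_trans (absD _ _) _; rewrite absM; apply: Rmax_lub.
  by apply: Rle_trans (Rmax_l _ _); exact: le_vnorm.
apply: Rle_trans (Rmax_r _ _); apply: Rmult_le_compat_l; [exact: abs_ge0|exact: le_vnorm].
Qed.

(* [c = a_j / b_j] is a closest point: [a - c b] vanishes at the index [j]
   where [|b|] is attained, so shifting it by a multiple of [b] cannot cancel. *)
Lemma vnorm_sub_pivot d (a b : nat -> K) j (al : K) :
  (j <= d)%N -> abs (b j) = vnorm d b -> b j != 0 ->
  vnorm d (fun i => a i - al * b i) =
  Rmax (Rmult (abs (a j / b j - al)) (vnorm d b)) (vnorm d (fun i => a i - a j / b j * b i)).
Proof.
move=> hj hbj bj0; set c := a j / b j.
have h1 := vnorm_addZ d (fun i => a i - c * b i) b (c - al).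
have h2 := vnorm_addZ d (fun i => a i - al * b i) b (- (c - al)).
have E1 : vnorm d (fun i => a i - c * b i + (c - al) * b i) = vnorm d (fun i => a i - al * b i).
  by apply: eq_bigr => i _; rewrite mulrBl addrA subrK.
have E2 : vnorm d (fun i => a i - al * b i + - (c - al) * b i) = vnorm d (fun i => a i - c * b i).
  by apply: eq_bigr => i _; rewrite mulNr mulrBl opprB addrA subrK.
rewrite E1 in h1; rewrite E2 absN in h2.
have h3 : Rle (Rmult (abs (c - al)) (vnorm d b)) (vnorm d (fun i => a i - al * b i)).
  have := le_vnorm (fun i => a i - al * b i) hj.
  by rewrite -{1}(divfK bj0 (a j)) -/c -mulrBl absM hbj.
apply: Rle_antisym; first by rewrite Rmax_comm.
by apply: Rmax_lub => //; move: h2; unfold Rmax at 1; case: Rle_dec => _ h; lra.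
Qed.

Lemma vnorm_pivot (d : nat) (b : nat -> K) : dehom d b != 0 ->
  exists j, [/\ (j <= d)%N, b j != 0 & abs (b j) = vnorm d b].
Proof.
move=> hb; have := wnorm_gt0 R0_lt_R1 hb; rewrite wnorm_dehom => hpos.
case: (vnorm_attained d b) => [h|[j [hj hbj]]]; first lra.
by exists j; split=> //; apply/eqP => h; move: hbj; rewrite h abs0; lra.
Qed.

Lemma push_zetaG_dehom_XsubC (d : nat) (a b : nat -> K) j (al : K) :
  (j <= d)%N -> b j != 0 -> abs (b j) = vnorm d b ->
  push_zetaG abs ((dehom d a)%:F / (dehom d b)%:F) ('X - al%:P) =
  Rmax (abs (a j / b j - al)) (Rdiv (vnorm d (fun i => a i - a j / b j * b i)) (vnorm d b)).
Proof.
move=> hj bj0 hbj.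
have hb : dehom d b != 0.
  by apply: contra_neq bj0 => /polyP/(_ j); rewrite coef_dehom hj coef0.
rewrite push_zetaG_XsubC -[(al%:P)%:F](mulfK (_ : (dehom d b)%:F != 0)) ?tofrac_eq0 //.
rewrite -mulrBl -!tofracM -tofracB dehom_subCM gaussF_frac // !wnorm_dehom.
by rewrite (vnorm_sub_pivot a al hj hbj bj0) Rmax_div // -hbj; exact: abs_gt0.
Qed.

Lemma max_minor_shift (d : nat) (a b : nat -> K) (e : K) :
  max_minor abs d a b = max_minor abs d (fun i => a i - e * b i) b.
Proof.
apply: eq_bigr => i _; apply: eq_bigr => k _; congr abs.
by rewrite !mulrBl -!mulrA [b i * b k]mulrC opprB addrA subrK.
Qed.

Lemma max_minor_pivot (d : nat) (a b : nat -> K) j :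
  (j <= d)%N -> a j = 0 -> abs (b j) = vnorm d b ->
  max_minor abs d a b = Rmult (vnorm d a) (vnorm d b).
Proof.
move=> hj aj0 hbj.
have ab0 : Rle R0 (Rmult (vnorm d a) (vnorm d b)) by apply: Rmult_le_pos; exact: vnorm_ge0.
apply: Rle_antisym.
  apply: bigmax_le => // i _; apply: bigmax_le => // k _.
  have le_ab (x y : 'I_d.+1) : Rle (abs (a x * b y)) (Rmult (vnorm d a) (vnorm d b)).
    by rewrite absM; apply: Rmult_le_compat; try exact: abs_ge0; apply: le_vnorm;
      rewrite -ltnS.
  by apply: Rle_trans (absB _ _) _; apply: Rmax_lub.
case: (vnorm_attained d a) => [->|[i [hi hai]]].
  by rewrite Rmult_0_l; exact: bigmax_ge0.
have [eij|nij] := eqVneq i j.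
  by rewrite hai eij aj0 abs0 Rmult_0_l; exact: bigmax_ge0.
pose oi : 'I_d.+1 := Ordinal (hi : i < d.+1)%N.
pose oj : 'I_d.+1 := Ordinal (hj : j < d.+1)%N.
apply: Rle_trans (le_bigmax _ (i := oi) (mem_index_enum _) isT).
apply: Rle_trans (le_bigmax (fun k : 'I_d.+1 => abs (a oi * b k - a k * b oi))
  (i := oj) (mem_index_enum _) nij).
by rewrite /= aj0 mul0r subr0 absM hai hbj; exact: Rle_refl.
Qed.

Lemma normalized_rep_vnorm (d : nat) (a b : nat -> K) phi :
  normalized_rep abs d a b phi -> Rmax (vnorm d a) (vnorm d b) = R1.
Proof.
case=> hbd [[i [hi hone]] _].
apply: Rle_antisym.
  by apply: Rmax_lub; apply: vnorm_le => [|k /hbd []]; lra.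
by case: hone => <-; [apply: Rle_trans (Rmax_l _ _)|apply: Rle_trans (Rmax_r _ _)];
  exact: le_vnorm.
Qed.

End NonarchimedeanAbs.

Lemma push_zetaG_eq_zeta (K : closedFieldType) (abs : K -> R) (Habs : nonarch_abs abs)
  (phi : {fraction {poly K}}) (c : K) (r : R) : Rlt R0 r ->
  (forall al, push_zetaG abs phi ('X - al%:P) = Rmax (abs (c - al)) r) ->
  forall f, push_zetaG abs phi f = zeta abs c r f.
Proof.
move=> hr hX; apply: multiplicative_eq_on_linear => [f g|f g|k|al].
- exact: push_zetaGM.
- exact: zetaM.
- by rewrite push_zetaGC ?zetaC //; exact: Rlt_le.
- by rewrite hX zeta_XsubC.
Qed.

Theorem proposition4p4 (K : closedFieldType) (abs : K -> R)
  (Habs : nonarch_abs abs) (Hnontriv : nontrivial_abs abs) (Hcompl : complete_abs abs)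
  (phi : {fraction {poly K}}) (d : nat) (Hd : (1 <= d)%N) (Hdeg : rat_degree phi d)
  (a b : nat -> K) (Hrep : normalized_rep abs d a b phi) :
  (exists (c : K) (r : R), Rlt R0 r /\ forall f, push_zetaG abs phi f = zeta abs c r f) /\
  (forall (c : K) (r : R), Rlt R0 r -> (forall f, push_zetaG abs phi f = zeta abs c r f) ->
     diamG abs c r = max_minor abs d a b).
Proof.
have ephi : phi = (dehom d a)%:F / (dehom d b)%:F by case: Hrep => _ [_ [_ ->]].
have phi_nonconst (k : K) : phi <> (k%:P)%:F.
  by move=> ek; move: Hdeg Hd; rewrite ek => /rat_degree_const ->.
have hb : dehom d b != 0.
  apply/eqP => hb; apply: (phi_nonconst 0).
  by rewrite ephi hb polyC0 tofrac0 invr0 mulr0.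
have [j [hj bj0 hbj]] := vnorm_pivot Habs hb.
set c := a j / b j; set a' := fun i => a i - c * b i.
have B_gt0 : Rlt R0 (vnorm abs d b) by rewrite -hbj; exact: abs_gt0.
have rho_gt0 : Rlt R0 (vnorm abs d a').
  case/Rle_lt_or_eq_dec: (vnorm_ge0 abs d a') => // /esym /(dehom_vnorm_eq0 Habs) h0.
  exfalso; apply: (phi_nonconst c).
  rewrite ephi -[dehom d a](subrK (c%:P * dehom d b)) dehom_subCM -/a' h0 add0r.
  by rewrite tofracM mulfK ?tofrac_eq0.
have hX al := push_zetaG_dehom_XsubC Habs a al hj bj0 hbj.
rewrite -ephi -/c -/a' in hX.
have hr : Rlt R0 (Rdiv (vnorm abs d a') (vnorm abs d b)) by exact: Rdiv_lt_0_compat.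
have Hall := push_zetaG_eq_zeta Habs hr hX.
split; first by exists c, (Rdiv (vnorm abs d a') (vnorm abs d b)).
move=> c' r' hr' H'; rewrite (@diamG_zeta_eq _ _ Habs c c' _ _ hr hr'); last first.
  by move=> al; rewrite -H' Hall.
have Na : vnorm abs d a = Rmax (Rmult (abs c) (vnorm abs d b)) (vnorm abs d a').
  rewrite -[c]subr0 -(vnorm_sub_pivot Habs a 0 hj hbj bj0).
  by apply: eq_bigr => i _; rewrite mul0r subr0.
have norm1 := normalized_rep_vnorm Hrep; rewrite Na in norm1.
rewrite /diamG (diam_rescale B_gt0 rho_gt0 (abs_ge0 Habs c) norm1).
rewrite (max_minor_shift _ _ _ _ c) (max_minor_pivot Habs hj) //.
by rewrite /a' /c divfK // subrr.
Qed.
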